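(* Let $\mathcal{X}$ be a feature space, $\mathcal{Y}\subseteq\mathbb{R}$, and $\ell:\mathbb{R}\times\mathcal{Y}\to\mathbb{R}_+$ a loss. For a distribution $P_{XY}$ on $\mathcal{X}\times\mathcal{Y}$ and $g:\mathcal{X}\to\mathbb{R}$ put $\mathcal{R}(g,P_{XY})=\mathbb{E}_{(X,Y)\sim P_{XY}}[\ell(g(X),Y)]$ and $\mathcal{R}^*(P_{XY}):=\min_{g:\mathcal{X}\to\mathbb{R}}\mathcal{R}(g,P_{XY})$ (the Bayes risk). Let $\mu$ be a distribution on the set $\mathfrak{P}_{\mathcal{X}\times\mathcal{Y}}$ of probability distributions on $\mathcal{X}\times\mathcal{Y}$ such that, $\mu$-almost surely, $P_{Y|X}=F(P_X)$ for some deterministic mapping $F$ (i.e. the posterior is a function of the marginal). Let $f^*:\mathfrak{P}_{\mathcal{X}}\times\mathcal{X}\to\mathbb{R}$ be a minimizer of $$\mathcal{E}(f,\infty):=\mathbb{E}_{P_{XY}\sim\mu}\,\mathbb{E}_{(X,Y)\sim P_{XY}}\big[\ell(f(P_X,X),Y)\big].$$ Then for $\mu$-almost all $P_{XY}$, $\mathcal{R}(f^*(P_X,\cdot),P_{XY})=\mathcal{R}^*(P_{XY})$, and $\mathcal{E}(f^*,\infty)=\mathbb{E}_{P_{XY}\sim\mu}[\mathcal{R}^*(P_{XY})]$.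
   Context: $\mathfrak{P}_{\mathcal{X}}$ denotes the set of probability distributions on $\mathcal{X}$. Every $P_{XY}\in\mathfrak{P}_{\mathcal{X}\times\mathcal{Y}}$ is disintegrated as $P_{XY}=P_X\bullet P_{Y|X}$ with marginal $P_X$ and posterior (conditional distribution of $Y$ given $X$) $P_{Y|X}$ ($\mathcal{X}$ is assumed regular enough, e.g. Polish, for this to exist). $\mathfrak{P}_{\mathcal{X}\times\mathcal{Y}}$ carries the topology of weak convergence and its Borel $\sigma$-algebra. *)

From HB Require Import structures.
From mathcomp Require Import all_boot all_order all_algebra.
From mathcomp Require Import all_classical all_reals all_analysis.
From mathcomp Require Import measurable_realfun.

Set Implicit Arguments.
Unset Strict Implicit.
Unset Printing Implicit Defensive.

Import Order.TTheory GRing.Theory Num.Theory.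
Local Open Scope classical_set_scope.
Local Open Scope ring_scope.

Section marginal.
Context d1 d2 (X : measurableType d1) (Y : measurableType d2) (R : realType).
Variable P : probability (X * Y)%type R.

Definition marginal : set X -> \bar R := fun A => P (fst @^-1` A).

Let mpre (A : set X) : measurable A -> measurable (fst @^-1` A : set (X * Y)).
Proof.
move=> mA; rewrite -[X in measurable X]setTI.
exact: (@measurable_fst _ _ X Y) mA.
Qed.

Let marginal0 : marginal set0 = 0%E.
Proof. by rewrite /marginal preimage_set0 measure0. Qed.

Let marginal_ge0 A : (0 <= marginal A)%E.
Proof. exact: measure_ge0. Qed.

Let marginal_sigma_additive : semi_sigma_additive marginal.
Proof.
move=> F mF tF mUF; rewrite /marginal preimage_bigcup.
apply: measure_semi_sigma_additive.
- by move=> n; exact: mpre.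
- apply/trivIsetP => /= i j _ _ ij; rewrite -preimage_setI.
  by move/trivIsetP : tF => /(_ _ _ _ _ ij) ->//; rewrite preimage_set0.
- by rewrite -preimage_bigcup; exact: mpre.
Qed.

HB.instance Definition _ := isMeasure.Build _ _ _ marginal
  marginal0 marginal_ge0 marginal_sigma_additive.

Let marginal_setT : marginal [set: X] = 1%E.
Proof. by rewrite /marginal preimage_setT probability_setT. Qed.

HB.instance Definition _ := Measure_isProbability.Build _ _ _ marginal marginal_setT.

End marginal.

Local Open Scope ereal_scope.

Definition risk d1 d2 (X : measurableType d1) (Y : measurableType d2)
  (R : realType) (ell : R -> Y -> R) (g : X -> R)
  (P : probability (X * Y)%type R) : \bar R :=
  \int[P]_z (ell (g z.1) z.2)%:E.

Definition bayes_risk d1 d2 (X : measurableType d1) (Y : measurableType d2)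
  (R : realType) (ell : R -> Y -> R) (P : probability (X * Y)%type R) : \bar R :=
  ereal_inf [set risk ell g P | g in [set g : X -> R | measurable_fun setT g]].

Definition meta_risk d1 d2 (X : measurableType d1) (Y : measurableType d2)
  (R : realType) (ell : R -> Y -> R)
  (mu : probability (pprobability (X * Y)%type R) R)
  (f : probability X R -> X -> R) : \bar R :=
  \int[mu]_P risk ell (f (marginal P)) P.

Definition is_posterior d1 d2 (X : measurableType d1) (Y : measurableType d2)
  (R : realType) (P : probability (X * Y)%type R) (K : X -> probability Y R) : Prop :=
  (forall B, measurable B -> measurable_fun setT (fun x => K x B)) /\
  (forall A B, measurable A -> measurable B ->
     P (A `*` B) = \int[marginal P]_(x in A) K x B).

(* The meta-risk of any meta-predictor f dominates the mu-average of the Bayes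
   risk, since pointwise R(f(P_X), P) >= R*(P).  Conversely, because the
   posterior is F(P_X) almost surely, P is (almost surely) determined by its
   marginal, so choosing for each marginal Q a Bayes predictor of some P with
   marginal Q and posterior F(Q) yields a meta-predictor attaining the Bayes
   risk almost everywhere.  Hence the minimal meta-risk equals the averaged
   Bayes risk, and since R(f*(P_X), P) dominates R*(P) with the same finite
   integral, the two coincide almost everywhere. *)
From HB Require Import structures.
From mathcomp Require Import all_boot all_order all_algebra.
From mathcomp Require Import all_classical all_reals all_analysis.
From mathcomp Require Import measurable_realfun.
Import Order.TTheory GRing.Theory Num.Theory.
Local Open Scope classical_set_scope.
Local Open Scope ereal_scope.
Import HBNNSimple.

(* The Bayes risk need not be measurable in P; for a nonnegative function
   which is not measurable, [\int] is the inner integral, i.e. the supremum of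
   the integrals of the simple functions below it. *)
Section inner_integral.
Context {d : measure_display} {T : measurableType d} {R : realType}.
Context {mu : {measure set T -> \bar R}%R}.

Lemma ge0_le_inner_integral (g u : T -> \bar R) :
  (forall x, 0 <= g x) -> (forall x, g x <= u x) ->
  \int[mu]_x g x <= \int[mu]_x u x.
Proof.
move=> g0 gu; have u0 x : 0 <= u x by exact: le_trans (gu x).
rewrite !ge0_integralTE//.
apply: ereal_sup_le => _ [h hg <-]; exists h => // x; exact: le_trans (hg x) (gu x).
Qed.

Lemma ae_ge0_le_inner_integral (g u : T -> \bar R) (N : set T) :
  measurable N -> mu N = 0 ->
  (forall x, 0 <= g x) -> (forall x, 0 <= u x) -> (forall x, ~ N x -> g x <= u x) ->
  \int[mu]_x g x <= \int[mu]_x u x.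
Proof.
move=> mN N0 g0 u0 gu; rewrite [leLHS]ge0_integralTE//.
apply: ge_ereal_sup => _ [h hg <-].
have mh : measurable_fun setT (EFin \o h).
  by apply/measurable_EFinP; exact: measurable_funPT.
rewrite -integralT_nnsfun (ge0_negligible_integral mN _ _ _ N0)//; last first.
  by move=> x _; rewrite lee_fin.
rewrite integral_mkcond; apply: ge0_le_inner_integral => x; rewrite /patch.
  by case: ifP => // _; rewrite lee_fin.
case: ifPn => // /set_mem [_ nN]; exact: le_trans (hg x) (gu x nN).
Qed.

Lemma inner_integral_measurable_minorant (b : T -> \bar R) :
  (forall x, 0 <= b x) -> \int[mu]_x b x < +oo ->
  exists2 H : T -> \bar R, measurable_fun setT H &
    [/\ forall x, 0 <= H x, forall x, H x <= b x & \int[mu]_x b x <= \int[mu]_x H x].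
Proof.
move=> b0 bfin.
have Ib0 : 0 <= \int[mu]_x b x by exact: integral_ge0.
have Ibfin : \int[mu]_x b x \is a fin_num by rewrite ge0_fin_numE.
have approx n : exists h : {nnsfun T >-> R}, (forall x, (h x)%:E <= b x) /\
    \int[mu]_x b x - (n.+1%:R^-1)%:E < sintegral mu h.
  have : \int[mu]_x b x - (n.+1%:R^-1)%:E < \int[mu]_x b x.
    by rewrite gte_subl// lte_fin invr_gt0.
  by rewrite [in X in _ < X]ge0_integralTE// => /ereal_sup_gt [_ [h hb <-] hlt]; exists h.
have /choice [h hh] := approx.
pose H x := esups (fun n => (h n x)%:E) 0%N.
have hH n x : (h n x)%:E <= H x by apply: ereal_sup_ubound; exists n.
have H0 x : 0 <= H x by apply: le_trans (hH 0%N x); rewrite lee_fin.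
have mH : measurable_fun setT H.
  apply: (measurable_fun_esups (f := fun n x => (h n x)%:E)) => n.
  by apply/measurable_EFinP; exact: measurable_funPT.
exists H => //; split => // [x|].
  by apply: ge_ereal_sup => _ [n _ <-]; exact: (hh n).1.
apply/lee_subgt0Pr => e e0.
have [k hk] := ltr_add_invr e0; rewrite add0r in hk.
apply: (@le_trans _ _ (\int[mu]_x b x - (k.+1%:R^-1)%:E)).
  by apply: leeB => //; rewrite lee_fin ltW.
apply: le_trans (ltW (hh k).2) _.
rewrite -integralT_nnsfun; apply: ge0_le_integral => //.
- by move=> x _; rewrite lee_fin.
- by apply/measurable_EFinP; exact: measurable_funPT.
Qed.

Lemma ge0_le_integral_ae_eq (v H : T -> \bar R) :
  measurable_fun setT v -> measurable_fun setT H ->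
  (forall x, 0 <= H x) -> (forall x, H x <= v x) ->
  \int[mu]_x v x < +oo -> \int[mu]_x v x <= \int[mu]_x H x ->
  ae_eq mu setT v H.
Proof.
move=> mv mH H0 Hv vfin vH.
have v0 x : 0 <= v x by exact: le_trans (Hv x).
have le_on A : measurable A -> \int[mu]_(x in A) H x <= \int[mu]_(x in A) v x.
  move=> mA; apply: ge0_le_integral => //;
    by [exact: measurable_funS mH | exact: measurable_funS mv].
have fin_on A : measurable A -> \int[mu]_(x in A) v x \is a fin_num.
  move=> mA; rewrite ge0_fin_numE ?integral_ge0//.
  by apply: le_lt_trans vfin; exact: ge0_subset_integral.
have split_on A f : measurable A -> measurable_fun setT f -> (forall x, 0 <= f x) ->
    \int[mu]_x f x = \int[mu]_(x in A) f x + \int[mu]_(x in ~` A) f x.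
  move=> mA mf f0; rewrite -ge0_integral_setU ?setUv//; first exact: measurableC.
  by rewrite disj_set2E setICr.
apply: integral_ae_eq => //.
  by apply/integrableP; split => //; under eq_integral do rewrite gee0_abs//.
move=> E _ mE; apply/le_anti; rewrite le_on// andbT.
have finCH : \int[mu]_(x in ~` E) H x \is a fin_num.
  rewrite ge0_fin_numE ?integral_ge0//; apply: le_lt_trans (le_on _ _) _.
    exact: measurableC.
  by rewrite -ge0_fin_numE ?integral_ge0// fin_on//; exact: measurableC.
have restrictE f : measurable_fun setT f -> (forall x, 0 <= f x) ->
    \int[mu]_(x in ~` E) f x \is a fin_num ->
    \int[mu]_(x in E) f x = \int[mu]_x f x - \int[mu]_(x in ~` E) f x.
  by move=> mf f0 fin; rewrite (split_on E)// addeK.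
rewrite restrictE ?fin_on ?[leRHS]restrictE//; last exact: measurableC.
by apply: leeB => //; apply: le_on; exact: measurableC.
Qed.

Lemma ge0_le_inner_integral_ae_eq (v b : T -> \bar R) : measurable_fun setT v ->
  (forall x, 0 <= b x) -> (forall x, b x <= v x) -> \int[mu]_x v x < +oo ->
  \int[mu]_x v x <= \int[mu]_x b x -> {ae mu, forall x, v x = b x}.
Proof.
move=> mv b0 bv vfin vb.
have bfin : \int[mu]_x b x < +oo by apply: le_lt_trans vfin; exact: ge0_le_inner_integral.
have [H mH [H0 Hb bH]] := inner_integral_measurable_minorant _ b0 bfin.
have Hv x : H x <= v x by exact: le_trans (Hb x) (bv x).
have := ge0_le_integral_ae_eq _ _ mv mH H0 Hv vfin (le_trans vb bH).
by apply: filterS => x /(_ I) vH; apply/le_anti; rewrite bv /= vH Hb.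
Qed.

End inner_integral.

Section bayes.
Context {d1 d2 : measure_display} {X : measurableType d1} {Y : measurableType d2}.
Context {R : realType}.
Variable ell : R -> Y -> R.
Hypothesis ell_ge0 : forall t y, (0 <= ell t y)%R.

Lemma posterior_measure_unique {P1 P2 : probability (X * Y)%type R}
    {K : X -> probability Y R} :
  marginal P1 = marginal P2 -> is_posterior P1 K -> is_posterior P2 K ->
  forall A, measurable A -> P1 A = P2 A.
Proof.
move=> eM [_ h1] [_ h2] A mA.
apply: (measure_unique [set A `*` B | A in measurable & B in measurable]
  (fun _ => setT)) => //.
- by rewrite measurable_prod_measurableType.
- move=> _ _ [A1 mA1 [B1 mB1 <-]] [A2 mA2 [B2 mB2 <-]]; rewrite -setXI.
  by exists (A1 `&` A2); [exact: measurableI | exists (B1 `&` B2) => //; exact: measurableI].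
- by move=> _; exists setT => //; exists setT => //; rewrite setXTT.
- by rewrite bigcup_const.
- move=> _ [A1 mA1 [B1 mB1 <-]].
  by apply: etrans (h1 _ _ mA1 mB1) (etrans _ (esym (h2 _ _ mA1 mB1))); rewrite eM.
- by move=> _; exact: (le_lt_trans (probability_le1 _ measurableT) (ltry _)).
Qed.

Lemma eq_risk (g : X -> R) {P1 P2 : probability (X * Y)%type R} :
  (forall A, measurable A -> P1 A = P2 A) -> risk ell g P1 = risk ell g P2.
Proof. by move=> P12; apply: eq_measure_integral => A mA _; exact: P12. Qed.

Lemma eq_bayes_risk {P1 P2 : probability (X * Y)%type R} :
  (forall A, measurable A -> P1 A = P2 A) -> bayes_risk ell P1 = bayes_risk ell P2.
Proof. by move=> P12; congr ereal_inf; apply: eq_imagel => g _; exact: eq_risk. Qed.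

Lemma risk_ge0 (g : X -> R) (P : probability (X * Y)%type R) : 0 <= risk ell g P.
Proof. by apply: integral_ge0 => z _; rewrite lee_fin. Qed.

Lemma bayes_risk_ge0 (P : probability (X * Y)%type R) : 0 <= bayes_risk ell P.
Proof. by apply/ereal_infP => _ [g _ <-]; exact: risk_ge0. Qed.

Lemma bayes_risk_le_risk (g : X -> R) (P : probability (X * Y)%type R) :
  measurable_fun setT g -> bayes_risk ell P <= risk ell g P.
Proof. by move=> mg; apply: ereal_inf_lbound; exists g. Qed.

Lemma exists_bayes_meta_predictor (F : probability X R -> X -> probability Y R) :
  (forall P : probability (X * Y)%type R,
     exists g : X -> R, measurable_fun setT g /\ risk ell g P = bayes_risk ell P) ->
  exists f : probability X R -> X -> R, (forall Q, measurable_fun setT (f Q)) /\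
    forall P : probability (X * Y)%type R, is_posterior P (F (marginal P)) ->
      risk ell (f (marginal P)) P = bayes_risk ell P.
Proof.
move=> bayes_attained.
suff /choice [f hf] : forall Q : probability X R, exists g : X -> R,
    measurable_fun setT g /\ forall P : probability (X * Y)%type R,
      marginal P = Q -> is_posterior P (F Q) -> risk ell g P = bayes_risk ell P.
  by exists f; split => [Q|P]; [exact: (hf Q).1 | exact: (hf _).2].
move=> Q; have [[P0 [P0Q P0F]]|noP] :=
  pselect (exists P0 : probability (X * Y)%type R, marginal P0 = Q /\ is_posterior P0 (F Q)).
- have [g [mg gP0]] := bayes_attained P0; exists g; split => // P PQ PF.
  have P0P := posterior_measure_unique (etrans P0Q (esym PQ)) P0F PF.
  by rewrite -(eq_risk g P0P) gP0; exact: eq_bayes_risk.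
- exists (cst 0%R); split => // P PQ PF.
  by exfalso; apply: noP; exists P.
Qed.

End bayes.

Theorem lemma3p1 (d1 d2 : measure_display) (X : measurableType d1)
  (Y : measurableType d2) (R : realType)
  (ell : R -> Y -> R)
  (ell_ge0 : forall t y, (0 <= ell t y)%R)
  (ell_meas : measurable_fun setT (fun p : R * Y => ell p.1 p.2))
  (mu : probability (pprobability (X * Y)%type R) R)
  (F : probability X R -> X -> probability Y R)
  (hF : {ae mu, forall P : pprobability (X * Y)%type R,
          is_posterior P (F (marginal P))})
  (bayes_attained : forall P : probability (X * Y)%type R,
     exists g : X -> R, measurable_fun setT g /\ risk ell g P = bayes_risk ell P)
  (fstar : probability X R -> X -> R)
  (fstar_meas : forall Q, measurable_fun setT (fstar Q))
  (fstar_min : forall f : probability X R -> X -> R,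
     (forall Q, measurable_fun setT (f Q)) ->
     meta_risk ell mu fstar <= meta_risk ell mu f)
  (fstar_finite : meta_risk ell mu fstar < +oo)
  (fstar_risk_meas : measurable_fun setT
     (fun P : pprobability (X * Y)%type R => risk ell (fstar (marginal P)) P)) :
  {ae mu, forall P : pprobability (X * Y)%type R,
     risk ell (fstar (marginal P)) P = bayes_risk ell P} /\
  meta_risk ell mu fstar = \int[mu]_P bayes_risk ell P.
Proof.
have [N [mN N0 notN_posterior]] := hF.
have [f [mf f_bayes]] := exists_bayes_meta_predictor ell F bayes_attained.
have fstar_le_f := fstar_min f mf.
have f_le_bayes : meta_risk ell mu f <= \int[mu]_P bayes_risk ell P.
  rewrite /meta_risk; apply: (ae_ge0_le_inner_integral _ _ _ mN N0).
  - by move=> P; exact: risk_ge0.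
  - by move=> P; exact: bayes_risk_ge0.
  - by move=> P NP; rewrite f_bayes //; apply: contrapT => /notN_posterior.
have bayes_le_fstar : \int[mu]_P bayes_risk ell P <= meta_risk ell mu fstar.
  apply: ge0_le_inner_integral => P; first exact: bayes_risk_ge0.
  exact: bayes_risk_le_risk.
have fstar_le_bayes := le_trans fstar_le_f f_le_bayes.
split; last by apply/le_anti; rewrite fstar_le_bayes bayes_le_fstar.
apply: ge0_le_inner_integral_ae_eq => // P; first exact: bayes_risk_ge0.
exact: bayes_risk_le_risk.
Qed.
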